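(* Let $f:(0,\infty)\to(0,\infty)$ be a strictly decreasing continuous bijection of $(0,\infty)$ onto $(0,\infty)$ (as is the case under (A)). Let $F:(0,\infty)\to(0,\infty)$ be a function that is continuous and strictly decreasing on some interval $[r_1,\infty)$, and suppose there exist $r_0>0$ and $0<a<2$ with $$f^2(r)\le F(r)\le f^a(r),\qquad r>r_0.$$ Let $\kappa,\widetilde\kappa>0$, let $\alpha(u)=(f^2)^{-1}(\kappa/u)$ and $\tau(u)=F^{-1}(\widetilde\kappa/u)$ for $u$ large enough (where $F^{-1}$ is the inverse of $F$ restricted to $[r_1,\infty)$). Let $m:(0,\infty)\to(0,\infty)$ be eventually increasing and let $\omega\ge0$ be such that for every $c>0$ and $\lambda\ge1$, $$\limsup_{s\to0^+}\frac{m\big(f^{-1}(cs^\lambda)\big)}{m\big(f^{-1}(s)\big)}\le\lambda^\omega. \qquad (\ast)$$ Then $$1\le\liminf_{u\to\infty}\frac{m(\tau(u))}{m(\alpha(u))}\le\limsup_{u\to\infty}\frac{m(\tau(u))}{m(\alpha(u))}\le\Big(\frac2a\Big)^{\omega}.$$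
   Context: Assumption (A) (for reference) in particular provides a strictly decreasing continuous profile $f:(0,\infty)\to(0,\infty)$ of a Lévy density with infinite total mass, which is a bijection of $(0,\infty)$ onto itself; $f^{-1}$ and $(f^2)^{-1}$ denote the inverses of $f$ and $f^2$. *)

From HB Require Import structures.
From mathcomp Require Import all_boot all_order all_algebra.
From mathcomp Require Import all_classical all_reals all_analysis.
Set Implicit Arguments. Unset Strict Implicit. Unset Printing Implicit Defensive.

From mathcomp Require Import all_boot all_order all_algebra.
From mathcomp Require Import all_classical all_reals all_analysis.

(* Put s = f (alpha u), so that s ^ 2 = kappa / u, alpha u = f^-1 s and s -> 0+
   as u -> +oo.  Since F (tau u) = kappat / u = (kappat / kappa) s ^ 2, the
   bounds f ^ 2 <= F <= f ^ a give, for u large,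
     f^-1 (c s) <= tau u <= f^-1 (c' s ^ (2 / a)),
   with c = sqrt (kappat / kappa) and c' = (kappat / kappa) ^ (1 / a).  As m is
   eventually nondecreasing, m (tau u) / m (alpha u) is then at most
   m (f^-1 (c' s ^ (2 / a))) / m (f^-1 s), whose limsup is <= (2 / a) ^ omega by
   hypothesis Hm with lambda = 2 / a, and its inverse is at most
   m (f^-1 s) / m (f^-1 (c s)), whose limsup is <= 1 by the same hypothesis
   with lambda = 1, read in the variable c s. *)

Import Order.TTheory GRing.Theory Num.Theory.
Import numFieldNormedType.Exports.
Local Open Scope classical_set_scope.
Local Open Scope ring_scope.
Local Open Scope ereal_scope.

Section limf_esup_einf_filter.
Context {R : realType} {T : choiceType} {X : filteredType T}.
Context (F : set_system X) {FF : Filter F}.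
Implicit Types (g : X -> \bar R) (l : \bar R).

Lemma limf_esup_lt_near g l :
  limf_esup g F < l -> \forall x \near F, g x < l.
Proof.
rewrite limf_esupE => /ereal_inf_lt[_ [V FV <-]] supl.
apply: filterS FV => x Vx; apply: le_lt_trans supl.
by apply: ereal_sup_ubound; exists x.
Qed.

Lemma limf_einf_ge_near g l :
  (\forall x \near F, l <= g x) -> l <= limf_einf g F.
Proof.
move=> gl; rewrite limf_einfE; apply: le_ereal_sup_tmp.
exists (ereal_inf (g @` [set x | l <= g x])).
  by exists [set x | l <= g x].
by apply: le_ereal_inf_tmp => _ [x /= lgx <-].
Qed.

Lemma limf_einf_le_esup {PF : ProperFilter F} g :
  limf_einf g F <= limf_esup g F.
Proof.
rewrite limf_einfE limf_esupE.
apply: ge_ereal_sup => _ [V FV <-]; apply: le_ereal_inf_tmp => _ [W FW <-].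
have [x [Vx Wx]] := filter_ex (filterI FV FW).
apply: (@le_trans _ _ (g x)).
  by apply: ereal_inf_lbound; exists x.
by apply: ereal_sup_ubound; exists x.
Qed.

Lemma limf_einf_ge_inv (r : X -> R) (l : R) : (0 < l)%R ->
  (\forall x \near F, 0 < r x)%R ->
  limf_esup (fun x => (r x)^-1%:E) F <= l%:E ->
  l^-1%:E <= limf_einf (fun x => (r x)%:E) F.
Proof.
move=> l0 r0 supl; apply/lee_mul01Pr; first by rewrite lee_fin invr_ge0 ltW.
move=> q /andP[q0 q1]; apply: limf_einf_ge_near.
have /limf_esup_lt_near : limf_esup (fun x => (r x)^-1%:E) F < (l / q)%:E.
  by apply: le_lt_trans supl _; rewrite lte_fin ltr_pdivlMr // gtr_pMr.
apply: filterS2 r0 => x rx0; rewrite !lte_fin -EFinM lee_fin => rxl.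
rewrite -invf_div -[r x]invrK lef_pV2 ?posrE ?invr_gt0 ?divr_gt0 //.
exact: ltW.
Qed.

End limf_esup_einf_filter.

Lemma limf_esup_le_comp {R : realType} {T U : choiceType}
    {X : filteredType T} {Y : filteredType U}
    (G : set_system X) {FG : Filter G} (F : set_system Y) (sigma : X -> Y)
    (rho : X -> \bar R) (phi : Y -> \bar R) :
  sigma @ G `=>` F -> (\forall x \near G, rho x <= phi (sigma x)) ->
  limf_esup rho G <= limf_esup phi F.
Proof.
move=> sigmaF rhophi; rewrite !limf_esupE.
apply: le_ereal_inf_tmp => _ [W FW <-].
set V := [set x | rho x <= phi (sigma x) /\ W (sigma x)].
apply: (@le_trans _ _ (ereal_sup (rho @` V))).
  apply: ereal_inf_lbound; exists V => //.
  exact: filterI rhophi (sigmaF W FW).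
apply: ge_ereal_sup => _ [x [rhox Wx] <-].
by apply: le_trans rhox _; apply: ereal_sup_ubound; exists (sigma x).
Qed.

Lemma cvg_at_right0 {R : realType} {T : choiceType} {X : filteredType T}
    (G : set_system X) {FG : Filter G} (sigma : X -> R) :
  (forall e, 0 < e -> \forall x \near G, 0 < sigma x < e)%R ->
  sigma @ G `=>` 0^'+.
Proof.
move=> small W /nbhs_ballP[e /= e0 We]; apply: filterS (small e e0).
move=> x /andP[x0 xe]; apply: We => //.
by rewrite /ball /= sub0r normrN gtr0_norm.
Qed.

Local Close Scope ereal_scope.

Section decreasing_inverse.
Context {R : realType} {D : {pred R}} {g ginv : R -> R}.
Hypothesis g_mono : {in D &, {mono g : x y /~ x <= y}}.

Lemma le_inv_decr x y : x \in D -> ginv y \in D -> g (ginv y) = y ->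
  (x <= ginv y) = (y <= g x).
Proof. by move=> Dx Dy gyE; rewrite -g_mono // gyE. Qed.

Lemma inv_decr_le x y : x \in D -> ginv y \in D -> g (ginv y) = y ->
  (ginv y <= x) = (g x <= y).
Proof. by move=> Dx Dy gyE; rewrite -g_mono // gyE. Qed.

Lemma inv_decrK x : x \in D -> ginv (g x) \in D -> g (ginv (g x)) = g x ->
  ginv (g x) = x.
Proof.
move=> Dx Dy gyE; apply/eqP; rewrite eq_le.
by rewrite le_inv_decr ?inv_decr_le // lexx.
Qed.

End decreasing_inverse.

Section alpha_tau_estimates.
Context {R : realType} {f finv f2inv F Finv : R -> R}.
Context {r0 r1 a kappa kappat : R}.
Hypothesis f_pos : forall x, 0 < x -> 0 < f x.
Hypothesis f_decr : forall x y, 0 < x -> x < y -> f y < f x.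
Hypothesis finv_spec : forall y, 0 < y -> 0 < finv y /\ f (finv y) = y.
Hypothesis f2inv_spec : forall y, 0 < y -> 0 < f2inv y /\ f (f2inv y) ^+ 2 = y.
Hypothesis F_pos : forall x, 0 < x -> 0 < F x.
Hypothesis r1_pos : 0 < r1.
Hypothesis F_decr : forall x y, r1 <= x -> x < y -> F y < F x.
Hypothesis Finv_spec :
  forall y, 0 < y -> y <= F r1 -> r1 <= Finv y /\ F (Finv y) = y.
Hypothesis a_pos : 0 < a.
Hypothesis HF : forall r, r0 < r -> f r ^+ 2 <= F r /\ F r <= f r `^ a.
Hypotheses (kappa_pos : 0 < kappa) (kappat_pos : 0 < kappat).
Context {m : R -> R}.
Hypothesis m_pos : forall x, 0 < x -> 0 < m x.
Hypothesis m_incr : exists M, forall x y, M <= x -> x <= y -> m x <= m y.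

Local Notation s u := (f (f2inv (kappa / u))).
Local Notation tau u := (Finv (kappat / u)).
Local Notation ratio u := (m (tau u) / m (f2inv (kappa / u))).

Let pos_itv (x : R) : (x \in `]0, +oo[) = (0 < x).
Proof. by rewrite in_itv /= andbT. Qed.

Let f_mono : {in `]0, +oo[ &, {mono f : x y /~ x <= y}}.
Proof.
by apply: le_nmono_in => x y; rewrite !pos_itv => _ y0; exact: f_decr.
Qed.

Let F_mono : {in `[r1, +oo[ &, {mono F : x y /~ x <= y}}.
Proof.
by apply: le_nmono_in => x y; rewrite !in_itv /= !andbT => _ r1y; exact: F_decr.
Qed.

Lemma s_gt0_sqr u : 0 < u -> 0 < s u /\ s u ^+ 2 = kappa / u.
Proof.
move=> u0; have [y0 fy] := f2inv_spec _ (divr_gt0 kappa_pos u0).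
by split => //; exact: f_pos.
Qed.

Lemma f2inv_gt0_finv u : 0 < u ->
  0 < f2inv (kappa / u) /\ f2inv (kappa / u) = finv (s u).
Proof.
move=> u0; have [y0 _] := f2inv_spec _ (divr_gt0 kappa_pos u0).
have [s0 _] := s_gt0_sqr _ u0; have [fs0 fsE] := finv_spec _ s0.
by rewrite (inv_decrK f_mono) ?pos_itv.
Qed.

Lemma scaled_s_small c e : 0 < c -> 0 < e ->
  \forall u \near +oo, 0 < c * s u < e.
Proof.
move=> c0 e0; near=> u.
have u0 : 0 < u by near: u; apply: nbhs_pinfty_gt; rewrite num_real.
have [s0 s2] := s_gt0_sqr _ u0.
have ec0 : 0 < e / c by exact: divr_gt0.
have se : s u < e / c.
  rewrite -(ltr_pXn2r (_ : 0 < 2)%N) ?nnegrE ?(ltW s0) ?(ltW ec0) // s2.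
  rewrite ltr_pdivrMr // mulrC -ltr_pdivrMr ?exprn_gt0 //.
  by near: u; apply: nbhs_pinfty_gt; rewrite num_real.
by rewrite mulr_gt0 //= mulrC -ltr_pdivlMr.
Unshelve. all: by end_near.
Qed.

Lemma s_cvg c : 0 < c -> (fun u => c * s u) @ +oo `=>` 0^'+.
Proof. by move=> c0; apply: cvg_at_right0 => e; exact: scaled_s_small. Qed.

Lemma tau_gt x : r1 <= x ->
  \forall u \near +oo, x < tau u /\ F (tau u) = kappat / u.
Proof.
move=> r1x; have Fx0 : 0 < F x by apply: F_pos; exact: lt_le_trans r1x.
near=> u.
have u0 : 0 < u by near: u; apply: nbhs_pinfty_gt; rewrite num_real.
have y0 : 0 < kappat / u by exact: divr_gt0.
have yFx : kappat / u < F x.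
  rewrite ltr_pdivrMr // mulrC -ltr_pdivrMr //.
  by near: u; apply: nbhs_pinfty_gt; rewrite num_real.
have Fxr1 : F x <= F r1 by rewrite F_mono ?in_itv /= ?lexx ?andbT.
have [r1t Ft] := Finv_spec _ y0 (ltW (lt_le_trans yFx Fxr1)).
split => //; rewrite ltNge; apply/negP => tx.
by move: yFx; rewrite -Ft ltNge F_mono ?in_itv /= ?r1x ?r1t ?andbT // tx.
Unshelve. all: by end_near.
Qed.

Lemma tau_lower M : \forall u \near +oo,
  M <= finv (Num.sqrt (kappat / kappa) * s u) <= tau u.
Proof.
set c := Num.sqrt (kappat / kappa); set T := Num.max 1 M.
have c0 : 0 < c by rewrite sqrtr_gt0 divr_gt0.
have T0 : 0 < T by rewrite lt_max ltr01.
near=> u.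
have u0 : 0 < u by near: u; apply: nbhs_pinfty_gt; rewrite num_real.
have [s0 s2] := s_gt0_sqr _ u0.
have [tT Ftau] : Num.max r0 r1 < tau u /\ F (tau u) = kappat / u.
  by near: u; apply: tau_gt; rewrite le_max lexx orbT.
have tau0 : 0 < tau u.
  by apply: le_lt_trans tT; rewrite le_max (ltW r1_pos) orbT.
have /andP[y0 yfT] : 0 < c * s u < f T.
  by near: u; exact: scaled_s_small _ _ c0 (f_pos _ T0).
have [fy0 fyE] := finv_spec _ y0.
apply/andP; split.
  apply: le_trans (_ : T <= _); first by rewrite le_max lexx orbT.
  by rewrite (le_inv_decr f_mono) ?pos_itv // ltW.
rewrite (inv_decr_le f_mono) ?pos_itv //.
rewrite -(ler_pXn2r (_ : 0 < 2)%N) ?nnegrE ?(ltW y0) ?(ltW (f_pos _ tau0)) //.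
have r0tau : r0 < tau u by apply: le_lt_trans tT; rewrite le_max lexx.
have [HFlo _] := HF _ r0tau.
rewrite (le_trans HFlo) // Ftau exprMn sqr_sqrtr; last first.
  by rewrite divr_ge0 // ltW.
by rewrite s2 mulrA divfK ?gt_eqF.
Unshelve. all: by end_near.
Qed.

Lemma tau_upper : \forall u \near +oo,
  tau u <= finv ((kappat / kappa) `^ a^-1 * s u `^ (2 / a)).
Proof.
near=> u.
have u0 : 0 < u by near: u; apply: nbhs_pinfty_gt; rewrite num_real.
have [s0 s2] := s_gt0_sqr _ u0.
have [tT Ftau] : Num.max r0 r1 < tau u /\ F (tau u) = kappat / u.
  by near: u; apply: tau_gt; rewrite le_max lexx orbT.
have tau0 : 0 < tau u.
  by apply: le_lt_trans tT; rewrite le_max (ltW r1_pos) orbT.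
set y := (kappat / kappa) `^ a^-1 * s u `^ (2 / a).
have y0 : 0 < y by rewrite mulr_gt0 // powR_gt0 // divr_gt0.
have [fy0 fyE] := finv_spec _ y0.
rewrite (le_inv_decr f_mono) ?pos_itv //.
have -> : y = (kappat / u) `^ a^-1.
  have -> : kappat / u = kappat / kappa * s u ^+ 2.
    by rewrite s2 mulrA divfK ?gt_eqF.
  rewrite powRM ?divr_ge0 ?sqr_ge0 ?(ltW kappat_pos) ?(ltW kappa_pos) //.
  by rewrite -(powR_mulrn 2 (ltW s0)) -powRrM.
have r0tau : r0 < tau u by apply: le_lt_trans tT; rewrite le_max lexx.
have [_ HFhi] := HF _ r0tau.
rewrite Ftau in HFhi.
have ia0 : 0 <= a^-1 by rewrite invr_ge0; exact: ltW.
have := ge0_ler_powR ia0 _ _ HFhi.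
rewrite -powRrM mulfV ?gt_eqF // powRr1 ?(ltW (f_pos _ tau0)) //; apply.
  by rewrite nnegrE divr_ge0 ?(ltW kappat_pos) ?(ltW u0).
by rewrite nnegrE powR_ge0.
Unshelve. all: by end_near.
Qed.

Lemma ratio_bounds : \forall u \near +oo,
  [/\ 0 < s u, 0 < ratio u,
      (ratio u)^-1 <=
        m (finv (s u)) / m (finv (Num.sqrt (kappat / kappa) * s u))
    & ratio u <=
        m (finv ((kappat / kappa) `^ a^-1 * s u `^ (2 / a))) / m (finv (s u))].
Proof.
have [M m_mono] := m_incr; set T := Num.max 1 M.
have T0 : 0 < T by rewrite lt_max ltr01.
have {}m_mono x y : T <= x -> x <= y -> m x <= m y.
  by move=> Tx; apply: m_mono; apply: le_trans Tx; rewrite le_max lexx orbT.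
near=> u.
have u0 : 0 < u by near: u; apply: nbhs_pinfty_gt; rewrite num_real.
have [s0 _] := s_gt0_sqr _ u0.
have [alpha0 alphaE] := f2inv_gt0_finv _ u0.
have /andP[Tc ctau] : T <= finv (Num.sqrt (kappat / kappa) * s u) <= tau u.
  by near: u; exact: tau_lower.
have tau_hi : tau u <= finv ((kappat / kappa) `^ a^-1 * s u `^ (2 / a)).
  by near: u; exact: tau_upper.
have c_pos := lt_le_trans T0 Tc; have tau0 := lt_le_trans c_pos ctau.
rewrite -alphaE divr_gt0 ?m_pos //; split => //.
  by rewrite invf_div ler_pM2l ?m_pos // lef_pV2 ?posrE ?m_pos // m_mono.
by rewrite ler_pM2r ?invr_gt0 ?m_pos // m_mono ?(le_trans Tc ctau).
Unshelve. all: by end_near.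
Qed.

End alpha_tau_estimates.

Theorem lemma4p1 (R : realType)
  (f finv f2inv F Finv m : R -> R) (r0 r1 a kappa kappat omega : R)
  (f_pos : forall x, 0 < x -> 0 < f x)
  (f_decr : forall x y, 0 < x -> x < y -> f y < f x)
  (f_cont : {in `]0, +oo[, continuous f})
  (f_onto : forall y, 0 < y -> exists2 x, 0 < x & f x = y)
  (finv_spec : forall y, 0 < y -> 0 < finv y /\ f (finv y) = y)
  (f2inv_spec : forall y, 0 < y -> 0 < f2inv y /\ f (f2inv y) ^+ 2 = y)
  (F_pos : forall x, 0 < x -> 0 < F x)
  (r1_pos : 0 < r1)
  (F_cont : {within `[r1, +oo[, continuous F})
  (F_decr : forall x y, r1 <= x -> x < y -> F y < F x)
  (Finv_spec : forall y, 0 < y -> y <= F r1 -> r1 <= Finv y /\ F (Finv y) = y)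
  (r0_pos : 0 < r0) (a_pos : 0 < a) (a_lt2 : a < 2)
  (HF : forall r, r0 < r -> f r ^+ 2 <= F r /\ F r <= f r `^ a)
  (kappa_pos : 0 < kappa) (kappat_pos : 0 < kappat)
  (m_pos : forall x, 0 < x -> 0 < m x)
  (m_incr : exists M, forall x y, M <= x -> x <= y -> m x <= m y)
  (omega_ge0 : 0 <= omega)
  (Hm : forall c lambda, 0 < c -> 1 <= lambda ->
     (limf_esup (fun s => (m (finv (c * s `^ lambda)) / m (finv s))%:E) (0^'+)
       <= (lambda `^ omega)%:E)%E) :
  let alpha := fun u => f2inv (kappa / u) in
  let tau := fun u => Finv (kappat / u) in
  let ratio := fun u => (m (tau u) / m (alpha u))%:E in
  (1%:E <= limf_einf ratio (pinfty_nbhs R)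
   /\ limf_einf ratio (pinfty_nbhs R) <= limf_esup ratio (pinfty_nbhs R)
   /\ limf_esup ratio (pinfty_nbhs R) <= ((2 / a) `^ omega)%:E)%E.
Proof.
move=> alpha tau ratio; rewrite {}/ratio {}/tau {}/alpha.
have bounds := ratio_bounds f_pos f_decr finv_spec f2inv_spec F_pos r1_pos
  F_decr Finv_spec a_pos HF kappa_pos kappat_pos m_pos m_incr.
set c := Num.sqrt (kappat / kappa) in bounds.
have c0 : 0 < c by rewrite sqrtr_gt0 divr_gt0.
split; last split.
- rewrite -[X in (X%:E <= _)%E]invr1; apply: limf_einf_ge_inv ltr01 _ _.
    by apply: filterS bounds => u [].
  have := Hm c^-1 1 _ (lexx 1); rewrite powR1 invr_gt0 => /(_ c0).
  apply: le_trans; apply: limf_esup_le_comp.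
    exact: (s_cvg f_pos f2inv_spec kappa_pos _ c0).
  apply: filterS bounds => u [s0 _ lo _].
  by rewrite /= powRr1 ?mulKf ?gt_eqF //; exact/ltW/mulr_gt0.
- exact: limf_einf_le_esup.
- have a2 : 1 <= 2 / a by rewrite ler_pdivlMr // mul1r; exact: ltW.
  have := Hm _ _ (powR_gt0 a^-1 (divr_gt0 kappat_pos kappa_pos)) a2.
  apply: le_trans; apply: limf_esup_le_comp.
    exact: (s_cvg f_pos f2inv_spec kappa_pos _ ltr01).
  by apply: filterS bounds => u [_ _ _ hi]; rewrite /= !mul1r lee_fin.
Qed.
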